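(* Let $(X,d)\in\mathfrak U$ with $|X|\geqslant 2$, and suppose the diametral graph is $G_d=G[X_1,X_2]$ (complete bipartite with parts $X_1,X_2$). Considering the subspaces $(X_1,d)$ and $(X_2,d)$, we have $$\operatorname{Sp}(X)=\operatorname{Sp}(X_1)\cup\operatorname{Sp}(X_2)\cup\{\operatorname{diam}X\}$$ and $$\operatorname{Sp}(X_1)\cap\operatorname{Sp}(X_2)=\varnothing.$$
   Context: For a metric space $(X,d)$, $\operatorname{Sp}(X)=\{d(x,y): x,y\in X,\ x\neq y\}$ (empty for a one-point space) and $\operatorname{diam}X=\sup\{d(x,y):x,y\in X\}$. $\mathfrak U$ denotes the class of finite ultrametric spaces $X$ with $|\operatorname{Sp}(X)|=|X|-1$. The diametral graph $G_d$ of $(X,d)$ has vertex set $X$, with $\{u,v\}$ an edge iff $d(u,v)=\operatorname{diam}X$. $G[X_1,X_2]$ denotes the complete bipartite graph with parts $X_1,X_2$ (disjoint, nonempty, covering the vertex set; no edges inside a part, all edges between parts). *)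

(* A finite metric space is a finType T with a distance
   d : T -> T -> R into a real domain R; subspaces are subsets A : {set T}. *)
From mathcomp Require Import all_boot all_order all_algebra.
Set Implicit Arguments. Unset Strict Implicit. Unset Printing Implicit Defensive.
Import Order.TTheory GRing.Theory Num.Theory.
Local Open Scope ring_scope.

Definition is_ultrametric (R : realDomainType) (T : finType) (d : T -> T -> R) : Prop :=
  [/\ forall x y, 0 <= d x y,
      forall x y, (d x y == 0) = (x == y),
      forall x y, d x y = d y x
    & forall x y z, d x z <= Num.max (d x y) (d y z)].

Definition Sp (R : realDomainType) (T : finType) (d : T -> T -> R) (A : {set T}) : seq R :=
  undup [seq d p.1 p.2 | p <- enum [set p : T * T | (p.1 \in A) && (p.2 \in A) && (p.1 != p.2)]].

(* diam A = sup { d(x,y) : x, y in A } (0 for the empty set; d >= 0) *)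
Definition diam (R : realDomainType) (T : finType) (d : T -> T -> R) (A : {set T}) : R :=
  \big[Num.max/0]_(x in A) \big[Num.max/0]_(y in A) d x y.

Definition in_U (R : realDomainType) (T : finType) (d : T -> T -> R) : Prop :=
  is_ultrametric d /\ size (Sp d [set: T]) = (#|T| - 1)%N.

Definition diam_edge (R : realDomainType) (T : finType) (d : T -> T -> R) (u v : T) : bool :=
  (u != v) && (d u v == diam d [set: T]).

Definition is_complete_bipartite (T : finType) (e : T -> T -> bool) (X1 X2 : {set T}) : Prop :=
  [/\ X1 != set0, X2 != set0, [disjoint X1 & X2], X1 :|: X2 = [set: T]
    & forall u v, e u v = ((u \in X1) && (v \in X2)) || ((u \in X2) && (v \in X1))].

From mathcomp Require Import all_boot all_order all_algebra.
From mathcomp Require Import zify.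
Import Order.TTheory GRing.Theory Num.Theory.
Local Open Scope ring_scope.

(* Every distance of X is either realised inside one part or is a cross
   distance, and all cross distances equal diam X.  Removing a point p from a
   finite ultrametric space loses at most one distance, namely the distance m
   from p to its nearest neighbour y0 (for any b, d(p,b) = m or d(p,b) = d(y0,b));
   hence |Sp(A)| <= |A| - 1 for every subspace A.  If some r lay in both
   Sp(X1) and Sp(X2), then |Sp(X)| <= 1 + |Sp(X1)| + |Sp(X2)| - 1 <= |X| - 2,
   contradicting X in U. *)

Lemma size_le_common_mem {R : eqType} {a r : R} {s s1 s2 : seq R} :
  uniq s -> uniq s2 -> {subset s <= a :: s1 ++ s2} ->
  r \in s1 -> r \in s2 -> (size s <= size s1 + size s2)%N.
Proof.
move=> s_uniq s2_uniq s_sub r1 r2.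
have s_sub' : {subset s <= a :: s1 ++ rem r s2}.
  move=> x /s_sub; rewrite !inE !mem_cat (mem_rem_uniq _ s2_uniq) inE.
  by case: (eqVneq x r) => [->|]; rewrite ?r1 ?orbT.
have s2_pos : (0 < size s2)%N by case: s2 {s2_uniq s_sub s_sub'} r2.
by have := uniq_leq_size s_uniq s_sub'; rewrite /= size_cat (size_rem r2); lia.
Qed.

Section Spectrum.
Variables (R : realDomainType) (T : finType) (d : T -> T -> R).

Lemma SpP (A : {set T}) r :
  reflect (exists a b, [/\ a \in A, b \in A, a != b & r = d a b]) (r \in Sp d A).
Proof.
rewrite /Sp mem_undup; apply: (iffP mapP).
  by move=> [[a b]]; rewrite mem_enum inE /= => /andP[/andP[aA bA] ab ->]; exists a, b.
by move=> [a [b [aA bA ab ->]]]; exists (a, b); rewrite ?mem_enum ?inE /= ?aA ?bA.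
Qed.

Lemma Sp_uniq (A : {set T}) : uniq (Sp d A).
Proof. exact: undup_uniq. Qed.

Lemma Sp_small (A : {set T}) : (#|A| <= 1)%N -> Sp d A = [::].
Proof.
move=> A_small; case Sp_A: (Sp d A) => [//|r s].
have /SpP[a [b [aA bA ab _]]] : r \in Sp d A by rewrite Sp_A mem_head.
have : ([set a; b] \subset A) by apply/subsetP => x; rewrite !inE => /orP[] /eqP->.
by move=> /subset_leq_card; rewrite cards2 ab => /leq_trans/(_ A_small).
Qed.

Lemma Sp_complete_bipartite_diam (X1 X2 : {set T}) :
  (forall x y, d x y = d y x) -> is_complete_bipartite (diam_edge d) X1 X2 ->
  forall r, (r \in Sp d [set: T]) =
    [|| r \in Sp d X1, r \in Sp d X2 | r == diam d [set: T]].
Proof.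
move=> d_sym [/set0Pn[u1 u1X1] /set0Pn[u2 u2X2] _ X_cover edge] r.
have inX x : (x \in X1) || (x \in X2) by rewrite -in_setU X_cover inE.
have cross u v : u \in X1 -> v \in X2 -> (u != v) && (d u v == diam d [set: T]).
  by move=> uX1 vX2; have := edge u v; rewrite /diam_edge uX1 vX2 => ->.
apply/SpP/or3P => [[a [b [_ _ ab ->]]]|].
  case/orP: (inX a) => aX; case/orP: (inX b) => bX.
  - by constructor 1; apply/SpP; exists a, b.
  - by constructor 3; case/andP: (cross a b aX bX).
  - by constructor 3; rewrite d_sym; case/andP: (cross b a bX aX).
  - by constructor 2; apply/SpP; exists a, b.
case=> [/SpP[a [b [aX bX ab ->]]]|/SpP[a [b [aX bX ab ->]]]|/eqP->].
- by exists a, b; rewrite !inE.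
- by exists a, b; rewrite !inE.
case/andP: (cross u1 u2 u1X1 u2X2) => u12 /eqP<-.
by exists u1, u2; rewrite !inE.
Qed.

Hypothesis d_ultra : is_ultrametric d.

Lemma Sp_setD1_subset (A : {set T}) (p y1 : T) : p \in A -> y1 \in A :\ p ->
  exists m, {subset Sp d A <= m :: Sp d (A :\ p)}.
Proof.
case: d_ultra => _ _ d_sym d_max pA y1B.
case: (@arg_minP _ R T y1 (mem (A :\ p)) (d p) y1B) => y0 y0B y0_min.
have near b : b \in A :\ p -> (d p b \in Sp d (A :\ p)) || (d p b == d p y0).
  move=> bB; case: (eqVneq b y0) => [->|b_y0]; first by rewrite eqxx orbT.
  have le_y0b := y0_min b bB.
  have le_pb : d p b <= Num.max (d p y0) (d y0 b) := d_max p y0 b.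
  case: (leP (d y0 b) (d p y0)) => [y0b_le|y0b_gt].
    by rewrite eq_le le_y0b (le_trans le_pb) ?ge_max ?lexx ?orbT.
  have y0b_le : d y0 b <= d p b.
    by have := d_max y0 p b; rewrite (d_sym y0 p) le_max leNgt y0b_gt.
  apply/orP; left; apply/SpP; exists y0, b; split; rewrite ?(eq_sym y0) //.
  by apply/eqP; rewrite eq_le y0b_le (le_trans le_pb) // ge_max (ltW y0b_gt) lexx.
exists (d p y0) => r /SpP[a [b [aA bA ab ->]]]; rewrite inE.
case: (eqVneq a p) => [a_p|ap].
  have /near : b \in A :\ p by rewrite !inE bA -a_p eq_sym ab.
  by rewrite a_p orbC.
case: (eqVneq b p) => [b_p|bp].
  have /near : a \in A :\ p by rewrite !inE ap aA.
  by rewrite b_p d_sym orbC.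
by apply/orP; right; apply/SpP; exists a, b; rewrite !inE ap bp aA bA.
Qed.

Lemma size_Sp_le (A : {set T}) : (size (Sp d A) <= #|A|.-1)%N.
Proof.
elim: #|A| {-2}A (erefl #|A|) => [|n IH] {}A A_card; first by rewrite Sp_small ?A_card.
have [n_le0|n_gt0] := leqP n 0; first by rewrite Sp_small ?A_card.
have [p pA] : {p | p \in A} by apply/sigW/card_gt0P; rewrite A_card.
have B_card : #|A :\ p| = n by move: (cardsD1 p A); rewrite pA A_card => -[].
have [y1 y1B] : {y | y \in A :\ p} by apply/sigW/card_gt0P; rewrite B_card.
have [m sub] := Sp_setD1_subset A p y1 pA y1B.
have := uniq_leq_size (Sp_uniq A) sub.
by move: (IH _ B_card); rewrite A_card B_card /=; lia.
Qed.

Lemma Sp_parts_disjoint (X1 X2 : {set T}) :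
  size (Sp d [set: T]) = (#|T| - 1)%N ->
  is_complete_bipartite (diam_edge d) X1 X2 ->
  forall r, ~~ ((r \in Sp d X1) && (r \in Sp d X2)).
Proof.
move=> Sp_size bip r; apply/negP => /andP[r1 r2].
have d_sym : forall x y, d x y = d y x by case: d_ultra.
have Sp_X := @Sp_complete_bipartite_diam X1 X2 d_sym bip.
case: bip => /set0Pn[u1 u1X1] /set0Pn[u2 u2X2] X_disj X_cover _.
have card_X : (#|X1| + #|X2| = #|T|)%N.
  move: X_disj; rewrite -setI_eq0 => /eqP X_cap.
  by rewrite -cardsUI X_cover X_cap cards0 addn0 cardsT.
have X1_pos : (0 < #|X1|)%N by apply/card_gt0P; exists u1.
have X2_pos : (0 < #|X2|)%N by apply/card_gt0P; exists u2.
have Sp_sub : {subset Sp d [set: T] <= diam d [set: T] :: Sp d X1 ++ Sp d X2}.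
  by move=> x; rewrite Sp_X inE mem_cat; case/or3P=> ->; rewrite ?orbT.
have := size_le_common_mem (Sp_uniq _) (Sp_uniq _) Sp_sub r1 r2.
move: (size_Sp_le X1) (size_Sp_le X2); rewrite Sp_size -card_X.
(* [set] merges [size] occurrences with different but convertible type
   arguments, which [lia] would treat as distinct atoms. *)
by set s1 := size (Sp d X1); set s2 := size (Sp d X2); lia.
Qed.

End Spectrum.

Theorem lemma6 (R : realDomainType) (T : finType) (d : T -> T -> R)
    (X1 X2 : {set T}) :
  in_U d -> (2 <= #|T|)%N ->
  is_complete_bipartite (diam_edge d) X1 X2 ->
  (forall r : R, (r \in Sp d [set: T]) =
     [|| r \in Sp d X1, r \in Sp d X2 | r == diam d [set: T]])
  /\ (forall r : R, ~~ ((r \in Sp d X1) && (r \in Sp d X2))).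
Proof.
move=> [d_ultra Sp_size] _ bip; split.
  by apply: Sp_complete_bipartite_diam bip; case: d_ultra.
exact: Sp_parts_disjoint.
Qed.
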